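(* Let $m\ge1$, $k\ge 1$, and let $p_1,\dots,p_m$ be probabilities summing to $1$; for a word $S$ on $[m]$ let $E(S)$ be the expected number of independent rolls of a die showing face $j$ with probability $p_j$ until $S$ first appears as a block of consecutive outcomes. (i) Suppose all $p_j>0$, and let $p=\min\{p_1,\dots,p_m\}=p_i$. Then \[ \max\{E(S): S\in[m]^k\} = p^{-1}+p^{-2}+\cdots+p^{-k} = \frac{1-p^k}{(1-p)p^k}, \] and the maximum is attained by $S=i^k$ (the run of $k$ copies of $i$). (ii) If $m>1$ and $p_1=\cdots=p_m$, then $\min\{E(S):S\in[m]^k\}=m^k$, and this minimum is attained by every $S\in[m]^k$ whose only overlap is $S$ itself, for example any word consisting of exactly two maximal runs of letters.
   Context: An overlap of $S$ is a nonempty word that is both a prefix and a suffix of $S$ (including $S$ itself). $[m]^k$ is the set of words of length $k$ on $[m]=\{1,\dots,m\}$. *)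

From HB Require Import structures.
From mathcomp Require Import all_boot all_order all_algebra.
From mathcomp Require Import all_classical all_reals all_analysis.
Set Implicit Arguments. Unset Strict Implicit. Unset Printing Implicit Defensive.
Import Order.TTheory GRing.Theory Num.Theory.
Local Open Scope ring_scope.

(* Words on [m] = {1,..,m} are represented as sequences over 'I_m. *)

Definition overlap (m : nat) (T S : seq 'I_m) : bool :=
  (0 < size T)%N && prefix T S && suffix T S.

Definition nruns (m : nat) (S : seq 'I_m) : nat :=
  match S with
  | [::] => 0
  | x :: s => (count id (pairmap (fun a b => a != b) x s)).+1
  end.

(* Probability (for i.i.d. rolls with face probabilities p) that the word S
   appears for the first time as a block of consecutive outcomes ending
   exactly at roll n: sum over outcome sequences w of length n that contain
   S as a factor while their first n-1 letters do not. *)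
Definition first_hit_prob (R : realType) (m : nat) (p : 'I_m -> R)
    (S : seq 'I_m) (n : nat) : R :=
  \sum_(w : n.-tuple 'I_m | infix S w && ~~ infix S (take n.-1 w))
     \prod_(x <- w) p x.

Definition expected_wait (R : realType) (m : nat) (p : 'I_m -> R)
    (S : seq 'I_m) : \bar R :=
  (\sum_(0 <= n <oo) ((n%:R * first_hit_prob p S n)%:E))%E.

From mathcomp Require Import all_boot all_order all_algebra.
From mathcomp Require Import all_classical all_reals all_analysis.
From mathcomp Require Import ring lra zify.
Import Order.TTheory GRing.Theory Num.Theory.
Local Open Scope ring_scope.
Set Implicit Arguments. Unset Strict Implicit. Unset Printing Implicit Defensive.

(* Let q n be the probability that S does not occur in the first n rolls.
   Appending S to a word of length n that avoids S, the first occurrence of S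
   ends inside the appended copy, after a prefix of S that is also a suffix,
   i.e. an overlap T; this gives the Guibas-Odlyzko identity
     q n = sum_T P(T)^-1 * P(first occurrence at time n + |T|).
   Summing over n shows that the partial sums of q increase to
   C = sum_T P(T)^-1 at rate C * q N, so E(S) = sum_n q n = C.  Part (i)
   compares each P(T)^-1 with p^-|T|; in part (ii) the term T = S alone is
   already m^k. *)

Section Words.
Variables (T : finType) (V : nmodType).

Fixpoint words n : seq (seq T) :=
  if n is n'.+1 then [seq x :: w | x <- enum T, w <- words n'] else [:: [::]].

Lemma mem_words n w : (w \in words n) = (size w == n).
Proof.
elim: n w => [|n IHn] w /=; first by rewrite inE; case: w.
apply/allpairsP/idP => [[[y v] /= [_ + ->]]|]; first by rewrite IHn.
by case: w => // x w w_n; exists (x, w); rewrite mem_enum IHn.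
Qed.

Lemma words_uniq n : uniq (words n).
Proof.
elim: n => //= n IHn; apply: allpairs_uniq => //; first exact: enum_uniq.
by move=> [x v] [y u] _ _ /= [-> ->].
Qed.

Lemma eq_big_words n (F G : seq T -> V) :
  (forall w, size w = n -> F w = G w) ->
  \sum_(w <- words n) F w = \sum_(w <- words n) G w.
Proof. by move=> FG; apply: eq_big_seq => w; rewrite mem_words => /eqP/FG. Qed.

Lemma big_tuple_words n (F : seq T -> V) :
  \sum_(w : n.-tuple T) F w = \sum_(w <- words n) F w.
Proof.
rewrite -big_enum -(big_map val xpredT); apply/perm_big/uniq_perm.
- by rewrite map_inj_uniq ?enum_uniq //; exact: val_inj.
- exact: words_uniq.
move=> w; rewrite mem_words; apply/mapP/idP => [[t _ ->]|/eqP w_n].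
  by rewrite size_tuple.
by exists (tcast w_n (in_tuple w)); rewrite ?mem_enum //= val_tcast.
Qed.

Lemma big_words_cons n (F : seq T -> V) :
  \sum_(w <- words n.+1) F w = \sum_(x : T) \sum_(w <- words n) F (x :: w).
Proof. by rewrite big_allpairs_dep big_enum. Qed.

Lemma big_words_cat j n (F : seq T -> V) :
  \sum_(w <- words (j + n)) F w =
  \sum_(u <- words j) \sum_(v <- words n) F (u ++ v).
Proof.
elim: j F => [|j IHj] F; first by rewrite big_seq1.
by rewrite addSn !big_words_cons; apply: eq_bigr => x _; rewrite IHj.
Qed.

Lemma big_words_rcons n (F : seq T -> V) :
  \sum_(w <- words n.+1) F w = \sum_(w <- words n) \sum_(x : T) F (rcons w x).
Proof.
rewrite -addn1 big_words_cat; apply: eq_bigr => w _.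
by rewrite big_words_cons; apply: eq_bigr => x _; rewrite big_seq1 cats1.
Qed.

End Words.

Section Weight.
Variables (T : finType) (R : realFieldType) (p : T -> R).

Definition weight (w : seq T) : R := \prod_(x <- w) p x.

Lemma weight_cat u v : weight (u ++ v) = weight u * weight v.
Proof. exact: big_cat. Qed.

Lemma weight_rcons w x : weight (rcons w x) = weight w * p x.
Proof. by rewrite -cats1 weight_cat /weight big_seq1. Qed.

Lemma weight_nseq n x : weight (nseq n x) = p x ^+ n.
Proof. by rewrite /weight big_nseq iter_mulr_1. Qed.

Lemma weight_const a w : (forall x, p x = a) -> weight w = a ^+ size w.
Proof.
move=> pa; rewrite /weight (eq_bigr _ (fun x _ => pa x)).
by rewrite big_const_seq count_predT iter_mulr_1.
Qed.

Lemma weight_ge_expn a w :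
  0 <= a -> (forall x, a <= p x) -> a ^+ size w <= weight w.
Proof.
move=> a_ge0 a_le; elim: w => [|x w IHw]; first by rewrite /weight big_nil.
by rewrite /weight big_cons exprS ler_pM // exprn_ge0.
Qed.

Hypothesis p_gt0 : forall x, 0 < p x.

Lemma weight_gt0 w : 0 < weight w.
Proof. exact: prodr_gt0. Qed.

Hypothesis p_sum1 : \sum_x p x = 1.

Lemma sum_weight_words n : \sum_(w <- words T n) weight w = 1.
Proof.
elim: n => [|n IHn]; first by rewrite big_seq1 /weight big_nil.
rewrite big_words_rcons -[RHS]IHn; apply: eq_bigr => w _.
by under eq_bigr do rewrite weight_rcons; rewrite -mulr_sumr p_sum1 mulr1.
Qed.

End Weight.

Lemma suffix_cat_drop (T : eqType) (s w u : seq T) :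
  suffix s (w ++ u) -> (size u <= size s)%N -> u = drop (size s - size u) s.
Proof.
case/suffixP => t def_wu u_le.
have := congr1 (drop (size w)) def_wu; rewrite drop_size_cat // drop_cat.
have size_wu : (size w + size u = size t + size s)%N by rewrite -!size_cat def_wu.
case: ltnP => [lt_wt|_ ->]; first by exfalso; lia.
by rewrite size_drop; congr drop; lia.
Qed.

Section FirstHit.
Variables (T : eqType) (S : seq T).

Definition first_hit (v : seq T) := infix S v && ~~ infix S (take (size v).-1 v).

Lemma first_hit_rcons w x :
  first_hit (rcons w x) = infix S (rcons w x) && ~~ infix S w.
Proof. by rewrite /first_hit size_rcons -cats1 take_size_cat. Qed.

Lemma first_hit_suffix v : first_hit v -> suffix S v.
Proof.
case/lastP: v => [|w x]; first by rewrite /first_hit infixs0 => /andP[/eqP->].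
by rewrite first_hit_rcons infix_rconsl => /andP[/orP[//|->]].
Qed.

Lemma first_hit_cat_drop w u :
  (size u <= size S)%N -> first_hit (w ++ u) -> u = drop (size S - size u) S.
Proof. by move=> u_le /first_hit_suffix/suffix_cat_drop; apply. Qed.

Lemma first_hit_cat_take w j : (j < size S)%N ->
  first_hit (w ++ take j.+1 S) =
  infix S (w ++ take j.+1 S) && ~~ infix S (w ++ take j S).
Proof.
move=> lt_jS; rewrite /first_hit size_cat size_takel // addnS /= take_cat.
by rewrite ltnNge leq_addr /= addKn take_takel.
Qed.

Lemma first_hit_cat_take_unique w : ~~ infix S w ->
  (\sum_(j < size S) first_hit (w ++ take j.+1 S) = 1)%N.
Proof.
move=> S_notin_w; pose hit j : nat := infix S (w ++ take j S).
have hit_homo : {homo hit : i j / (i <= j)%N}.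
  move=> i j /subnK <-; rewrite addnC /hit.
  have : infix (w ++ take i S) (w ++ take (i + (j - i)) S).
    by rewrite takeD catA prefix_infix.
  by case: (boolP (infix S _)) => // /infix_trans/[apply] ->.
rewrite -(big_mkord xpredT (fun j => nat_of_bool (first_hit (w ++ take j.+1 S)))).
rewrite (eq_big_nat _ _ (F2 := fun j => (hit j.+1 - hit j)%N)); last first.
  move=> j /andP[_ lt_jS]; rewrite first_hit_cat_take //.
  by have := hit_homo j j.+1 (leqnSn j); rewrite /hit; do 2!case: infix.
rewrite telescope_sumn // /hit take_size take0 cats0 suffix_infix.
by rewrite (negPf S_notin_w).
Qed.

End FirstHit.

Section HittingTime.
Variables (T : finType) (R : realFieldType) (p : T -> R) (S : seq T).
Local Notation k := (size S).
Local Notation weight := (weight p).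

Definition avoid_prob n : R := \sum_(w <- words T n | ~~ infix S w) weight w.
Definition hit_prob n : R := \sum_(w <- words T n | first_hit S w) weight w.
Definition overlap_weight j : R :=
  if suffix (take j S) S then (weight (take j S))^-1 else 0.
Definition overlap_sum : R := \sum_(j < k) overlap_weight j.+1.

Hypothesis p_gt0 : forall x, 0 < p x.

Lemma avoid_prob_ge0 n : 0 <= avoid_prob n.
Proof. by apply: sumr_ge0 => w _; exact/ltW/weight_gt0. Qed.

Lemma hit_prob_ge0 n : 0 <= hit_prob n.
Proof. by apply: sumr_ge0 => w _; exact/ltW/weight_gt0. Qed.

Lemma overlap_weight_ge0 j : 0 <= overlap_weight j.
Proof.
by rewrite /overlap_weight; case: ifP => // _; rewrite invr_ge0 ltW ?weight_gt0.
Qed.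

Lemma overlap_weight_first_hit w j : (j < k)%N ->
  (if first_hit S (w ++ take j.+1 S) then weight (w ++ S) else 0) =
  overlap_weight j.+1 *
    (if first_hit S (w ++ drop (k - j.+1) S)
     then weight (w ++ drop (k - j.+1) S) else 0) * weight S.
Proof.
move=> lt_jk; have size_take : size (take j.+1 S) = j.+1 by rewrite size_takel.
rewrite /overlap_weight suffixE size_take; case: eqP => [->|ne_take].
  case: first_hit; rewrite ?mulr0 ?mul0r // !weight_cat.
  by field; rewrite lt0r_neq0 ?weight_gt0.
rewrite !mul0r; case: ifP => // /first_hit_cat_drop.
by rewrite size_take => /(_ lt_jk) eq_take; case: ne_take.
Qed.

Hypothesis p_sum1 : \sum_x p x = 1.

Lemma hit_probS n : hit_prob n.+1 = avoid_prob n - avoid_prob n.+1.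
Proof.
apply/eqP; rewrite eq_sym subr_eq addrC; apply/eqP.
rewrite /hit_prob /avoid_prob big_mkcond.
rewrite [X in _ = X + _]big_mkcond [X in _ = _ + X]big_mkcond.
rewrite -big_split big_words_rcons /=.
apply: eq_bigr => w _; case: (boolP (infix S w)) => [w_hit|w_avoid].
  rewrite big1 // => x _; rewrite first_hit_rcons w_hit andbF.
  by rewrite (infix_trans w_hit (infix_rcons _ _)) addr0.
rewrite -[weight w]mulr1 -p_sum1 mulr_sumr; apply: eq_bigr => x _.
rewrite first_hit_rcons w_avoid andbT weight_rcons.
by case: infix; rewrite ?addr0 ?add0r.
Qed.

Lemma avoid_prob_nonincreasing : nonincreasing_seq avoid_prob.
Proof.
by apply/nonincreasing_seqP => n; rewrite -subr_ge0 -hit_probS hit_prob_ge0.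
Qed.

Lemma avoid_prob_small n : (n < k)%N -> avoid_prob n = 1.
Proof.
move=> lt_nk; rewrite /avoid_prob -(sum_weight_words p_sum1 n) big_mkcond.
apply: eq_big_words => w w_n; case: ifPn => // /negPn /size_infix.
by rewrite w_n leqNgt lt_nk.
Qed.

Lemma hit_prob_addn n j : (0 < j <= k)%N ->
  hit_prob (n + j) = \sum_(w <- words T n | ~~ infix S w)
    (if first_hit S (w ++ drop (k - j) S) then weight (w ++ drop (k - j) S) else 0).
Proof.
case/andP=> j_gt0 le_jk; rewrite /hit_prob big_mkcond big_words_cat [RHS]big_mkcond.
apply: eq_big_words => w _ /=; case: ifPn => [w_avoid|/negPn w_hit].
  rewrite (bigD1_seq (drop (k - j) S)) ?words_uniq ?mem_words ?size_drop ?subKn //=.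
  rewrite big1_seq ?addr0 // => u /andP[ne_u]; rewrite mem_words => /eqP u_j.
  case: ifP => // /first_hit_cat_drop; rewrite u_j => /(_ le_jk) eq_u.
  by rewrite eq_u eqxx in ne_u.
rewrite big1_seq // => u; rewrite mem_words => /eqP u_j.
case/lastP: u u_j => [|u x _]; first by move=> j0; rewrite -j0 in j_gt0.
by rewrite -rcons_cat first_hit_rcons infix_catr ?andbF.
Qed.

Lemma avoid_prob_overlap n :
  avoid_prob n = \sum_(j < k) overlap_weight j.+1 * hit_prob (n + j.+1).
Proof.
have wS_neq0 : weight S != 0 by rewrite lt0r_neq0 ?weight_gt0.
apply: (mulIf wS_neq0); rewrite /avoid_prob !mulr_suml.
transitivity (\sum_(w <- words T n | ~~ infix S w) \sum_(j < k)
    (if first_hit S (w ++ take j.+1 S) then weight (w ++ S) else 0)).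
  apply: eq_bigr => w w_avoid; rewrite -weight_cat -[LHS]mul1r.
  rewrite -[1 : R]/(1%N%:R) -(first_hit_cat_take_unique w_avoid) natr_sum mulr_suml.
  by apply: eq_bigr => j _; case: first_hit; rewrite ?mul1r ?mul0r.
rewrite exchange_big; apply: eq_bigr => [[j lt_jk]] _ /=.
rewrite hit_prob_addn // mulr_sumr mulr_suml; apply: eq_bigr => w _.
exact: overlap_weight_first_hit.
Qed.

Lemma sum_hit_prob_shift j N :
  \sum_(t < N) hit_prob (t + j.+1) = avoid_prob j - avoid_prob (N + j).
Proof.
elim: N => [|N IHN]; first by rewrite big_ord0 subrr.
by rewrite big_ord_recr /= IHN addnS hit_probS addSn addrA subrK.
Qed.

Lemma sum_avoid_prob N : \sum_(t < N) avoid_prob t =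
  \sum_(j < k) overlap_weight j.+1 * (1 - avoid_prob (N + j)).
Proof.
under eq_bigr do rewrite avoid_prob_overlap.
rewrite exchange_big; apply: eq_bigr => [[j lt_jk]] _ /=.
by rewrite -mulr_sumr sum_hit_prob_shift avoid_prob_small.
Qed.

Lemma sum_avoid_prob_le N : \sum_(t < N) avoid_prob t <= overlap_sum.
Proof.
rewrite sum_avoid_prob; apply: ler_sum => j _.
by rewrite -[leRHS]mulr1 ler_wpM2l ?overlap_weight_ge0 // gerBl avoid_prob_ge0.
Qed.

Lemma overlap_sum_le_sum_avoid_prob N :
  overlap_sum <= \sum_(t < N) avoid_prob t + overlap_sum * avoid_prob N.
Proof.
rewrite sum_avoid_prob mulr_suml -big_split; apply: ler_sum => j _ /=.
rewrite mulrBr mulr1 -addrA lerDl addrC subr_ge0 ler_wpM2l ?overlap_weight_ge0 //.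
exact/avoid_prob_nonincreasing/leq_addr.
Qed.

End HittingTime.

Section MeanFromTails.
Variables (R : realType) (q f : nat -> R) (C : R).
Hypotheses (q_ge0 : forall n, 0 <= q n) (f_ge0 : forall n, 0 <= f n).
Hypothesis f_diff : forall n, f n.+1 = q n - q n.+1.
Hypothesis sum_q_le : forall N, \sum_(t < N) q t <= C.
Hypothesis sum_q_ge : forall N, C <= \sum_(t < N) q t + C * q N.

Local Notation partial_mean N := (\sum_(n < N) n%:R * f n).

Let q_nonincreasing : nonincreasing_seq q.
Proof. by apply/nonincreasing_seqP => n; rewrite -subr_ge0 -f_diff. Qed.

Let C_ge0 : 0 <= C.
Proof. by have := sum_q_le 0; rewrite big_ord0. Qed.

Lemma partial_meanE N : partial_mean N.+1 = \sum_(t < N) q t - N%:R * q N.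
Proof.
elim: N => [|N IHN]; first by rewrite big_ord1 big_ord0 !mul0r subr0.
by rewrite big_ord_recr /= IHN big_ord_recr /= f_diff -natr1; ring.
Qed.

Lemma mul_tail_le_sum N : N%:R * q N <= \sum_(t < N) q t.
Proof.
apply: le_trans (_ : \sum_(t < N) q N <= _).
  by rewrite sumr_const card_ord mulr_natl.
by apply: ler_sum => t _; apply/q_nonincreasing/ltnW.
Qed.

Lemma sum_tail_split M d :
  \sum_(t < M) q t + d%:R * q (M + d) <= \sum_(t < M + d) q t.
Proof.
rewrite big_split_ord lerD2l; apply: le_trans (_ : \sum_(t < d) q (M + d) <= _).
  by rewrite sumr_const card_ord mulr_natl.
by apply: ler_sum => t _; apply/q_nonincreasing; rewrite leq_add2l ltnW.
Qed.

(* With N = M * M, both error terms C * q M and M * q N are at most C / M,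
   because M * q M <= C and N * q N <= C. *)
Lemma partial_mean_gap M :
  M%:R * (C - partial_mean (M * M).+1) <= C * C + C.
Proof.
have [->|M_gt0] := posnP M; first by rewrite mul0r addr_ge0 ?mulr_ge0.
have le_M_MM : (M <= M * M)%N by rewrite leq_pmulr.
have tail_split := sum_tail_split M (M * M - M).
rewrite subnKC // natrB // in tail_split.
have gap : C - partial_mean (M * M).+1 <= C * q M + M%:R * q (M * M).
  by rewrite partial_meanE; have := sum_q_ge M; lra.
apply: le_trans (ler_wpM2l (ler0n _ M) gap) _.
rewrite mulrDr mulrCA [X in _ + X]mulrA -natrM lerD //.
  by rewrite ler_wpM2l // (le_trans (mul_tail_le_sum M)).
exact: le_trans (mul_tail_le_sum _) (sum_q_le _).
Qed.

Lemma nneseries_mean_tails : (\sum_(0 <= n <oo) (n%:R * f n)%:E = C%:E)%E.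
Proof.
have term_ge0 n : 0 <= n%:R * f n by rewrite mulr_ge0.
have partialE N : (\sum_(0 <= n < N) (n%:R * f n)%:E = (partial_mean N)%:E)%E.
  by rewrite sumEFin big_mkord.
apply/eqP; rewrite eq_le; apply/andP; split.
  apply: lime_le; first by apply: is_cvg_nneseries => n _ _; rewrite lee_fin.
  apply: nearW => -[|N]; rewrite partialE lee_fin ?big_ord0 // partial_meanE.
  by rewrite lerBlDr (le_trans (sum_q_le N)) // lerDl mulr_ge0.
apply/lee_addgt0Pr => e e_gt0.
pose M := (Num.truncn ((C * C + C) / e)).+1.
have M_big : C * C + C < M%:R * e by rewrite -ltr_pdivrMr // truncnS_gt.
have : C <= partial_mean (M * M).+1 + e.
  rewrite -lerBlDl; apply/ltW; rewrite -(ltr_pM2l (ltr0Sn _ _ : 0 < M%:R)).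
  exact: le_lt_trans (partial_mean_gap M) M_big.
rewrite -lee_fin EFinD -partialE => /le_trans; apply.
by rewrite leeD2r // nneseries_lim_ge // => n _ _; rewrite lee_fin.
Qed.

End MeanFromTails.

Lemma first_hit_probE (R : realType) m (p : 'I_m -> R) S n :
  first_hit_prob p S n = hit_prob p S n.
Proof.
rewrite /first_hit_prob /hit_prob big_mkcond [RHS]big_mkcond -big_tuple_words.
by apply: eq_bigr => w _; rewrite /first_hit size_tuple.
Qed.

Theorem expected_waitE (R : realType) m (p : 'I_m -> R) S :
  (forall x, 0 < p x) -> \sum_x p x = 1 ->
  expected_wait p S = (overlap_sum p S)%:E.
Proof.
move=> p_gt0 p_sum1.
apply: (nneseries_mean_tails (q := avoid_prob p S)) => [n|n|n|N|N].
- exact: avoid_prob_ge0.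
- by rewrite first_hit_probE hit_prob_ge0.
- by rewrite first_hit_probE hit_probS.
- exact: sum_avoid_prob_le.
- exact: overlap_sum_le_sum_avoid_prob.
Qed.

Section OverlapSum.
Variables (T : finType) (R : realFieldType) (p : T -> R).

Lemma overlap_sum_le_sum_invX a S : 0 < a -> (forall x, a <= p x) ->
  overlap_sum p S <= \sum_(1 <= e < (size S).+1) a ^- e.
Proof.
move=> a_gt0 a_le; rewrite big_add1 /= big_mkord; apply: ler_sum => -[j lt_jS] _.
rewrite /overlap_weight; case: ifP => _; last by rewrite invr_ge0 exprn_ge0 ?ltW.
have := weight_ge_expn (take j.+1 S) (ltW a_gt0) a_le; rewrite size_takel //.
move=> a_le_w; rewrite lef_pV2 ?posrE ?exprn_gt0 //.
by rewrite (lt_le_trans _ a_le_w) ?exprn_gt0.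
Qed.

Lemma overlap_sum_nseq k x :
  overlap_sum p (nseq k x) = \sum_(1 <= e < k.+1) p x ^- e.
Proof.
rewrite big_add1 /= big_mkord /overlap_sum size_nseq; apply: eq_bigr => -[j lt_jk] _.
rewrite /overlap_weight take_nseq // weight_nseq.
by rewrite -[in nseq k x](subnK lt_jk) nseqD suffix_suffix.
Qed.

Hypothesis p_gt0 : forall x, 0 < p x.

Lemma inv_weight_le_overlap_sum S :
  (0 < size S)%N -> (weight p S)^-1 <= overlap_sum p S.
Proof.
move=> S_gt0; rewrite /overlap_sum -(prednK S_gt0) big_ord_recr /= prednK //.
rewrite /overlap_weight take_size suffix_refl lerDr.
by apply: sumr_ge0 => j _; exact: overlap_weight_ge0.
Qed.

End OverlapSum.

Lemma sum_invX (R : fieldType) (x : R) n : x != 0 -> x != 1 ->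
  \sum_(1 <= e < n.+1) x ^- e = (1 - x ^+ n) / ((1 - x) * x ^+ n).
Proof.
move=> x_neq0 x_neq1; have x1_neq0 : 1 - x != 0 by rewrite subr_eq0 eq_sym.
elim: n => [|n IHn]; first by rewrite big_geq // expr0 subrr mul0r.
rewrite big_nat_recr //= IHn !exprS; field.
by rewrite x1_neq0 x_neq0 expf_neq0.
Qed.

Lemma uniform_probE (R : realFieldType) m (p : 'I_m -> R) :
  (forall j j', p j = p j') -> \sum_j p j = 1 -> forall j, p j = m%:R^-1.
Proof.
move=> p_const p_sum1 j.
have : \sum_(l < m) p l = m%:R * p j.
  by rewrite (eq_bigr _ (fun l _ => p_const l j)) sumr_const card_ord mulr_natl.
rewrite p_sum1 => /esym m_pj.
have m_neq0 : m%:R != 0 :> R.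
  by apply: contra_eq_neq m_pj => ->; rewrite mul0r eq_sym oner_neq0.
by apply: (mulfI m_neq0); rewrite m_pj mulfV.
Qed.

Section Overlap.
Variable m : nat.
Implicit Types (a b : 'I_m) (s S U : seq 'I_m).

Lemma overlap_sum_trivial (R : realFieldType) (p : 'I_m -> R) S :
  (0 < size S)%N -> (forall U, overlap U S -> U = S) ->
  overlap_sum p S = (weight p S)^-1.
Proof.
move=> S_gt0 S_trivial.
rewrite /overlap_sum -(prednK S_gt0) big_ord_recr /= prednK //.
rewrite big1 ?add0r => [|[j lt_j] _ /=].
  by rewrite /overlap_weight take_size suffix_refl.
rewrite /overlap_weight; case: ifP => // S_j; exfalso.
have size_j : size (take j.+1 S) = j.+1 by rewrite size_takel //; lia.
have := S_trivial (take j.+1 S); rewrite /overlap size_j prefix_take S_j => /(_ isT).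
by move/(congr1 size); rewrite size_j; lia.
Qed.

Lemma overlap_cons_notin a s U : a \notin s -> overlap U (a :: s) -> U = a :: s.
Proof.
move=> a_notin_s /andP[/andP[U_gt0 U_pre] /suffixP[[|b t] //= [_ def_s]]].
case: U U_gt0 U_pre def_s => // c U _ /andP[/eqP-> _] def_s.
by rewrite def_s mem_cat inE eqxx orbT in a_notin_s.
Qed.

(* A proper overlap U is shifted by d = size S - size U > 0; at position
   r.+1 - d it reads a as a prefix of S but a letter of s as a suffix. *)
Lemma overlap_nseq_cat a r s U : a \notin s -> s != [::] ->
  overlap U (nseq r.+1 a ++ s) -> U = nseq r.+1 a ++ s.
Proof.
set S := nseq r.+1 a ++ s => a_notin_s s_neq0 /andP[/andP[U_gt0 U_pre] U_suf].
have size_s : (0 < size s)%N by rewrite lt0n size_eq0.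
have size_S : size S = (r.+1 + size s)%N by rewrite size_cat size_nseq.
have size_U : (size U <= size S)%N := size_prefix U_pre.
move: U_pre U_suf; rewrite prefixE suffixE => /eqP U_take.
move def_d : (size S - size U)%N => d /eqP U_drop.
have [d0|d_gt0] := posnP d; first by rewrite -U_drop d0 drop0.
have lt_s : (d + (r.+1 - d) - r.+1 < size s)%N by lia.
have := congr1 (nth a ^~ (r.+1 - d)%N) (etrans U_take (esym U_drop)).
rewrite /= nth_take; last by lia.
rewrite nth_drop /S !nth_cat size_nseq !nth_nseq !if_same ifT; last by lia.
rewrite ifF; last by apply/negbTE; rewrite -leqNgt; lia.
by move=> a_in_s; move: a_notin_s; rewrite [X in X \in s]a_in_s mem_nth.
Qed.

Lemma nruns_eq2 S : nruns S = 2 ->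
  exists a b r t, a != b /\ S = nseq r.+1 a ++ nseq t.+1 b.
Proof.
have constant_run x s :
    count id (pairmap (fun a b => a != b) x s) = 0%N -> s = nseq (size s) x.
  by elim: s x => //= y s IHs x; case: eqP => //= <- /IHs <-.
case: S => // x s []; elim: s x => //= y s IHs x.
case: eqP => [<- /IHs|/eqP ne_xy] /=.
  by case=> [a [b [r [t [ne_ab [-> ->]]]]]]; exists a, b, r.+1, t.
rewrite add1n => -[/constant_run def_s]; exists x, y, 0%N, (size s).
by rewrite /= -def_s.
Qed.

End Overlap.

Theorem corollary4p5 (R : realType) (m k : nat) (p : 'I_m -> R) :
  (1 <= m)%N -> (1 <= k)%N ->
  (forall j, 0 <= p j) -> \sum_(j < m) p j = 1 ->
  (* (i) *)
  ((forall j, 0 < p j) ->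
   forall i : 'I_m, (forall j, p i <= p j) ->
     (forall S : seq 'I_m, size S = k ->
        (expected_wait p S <= (\sum_(1 <= e < k.+1) p i ^- e)%:E)%E)
     /\ expected_wait p (nseq k i) = (\sum_(1 <= e < k.+1) p i ^- e)%:E
     /\ (p i < 1 -> \sum_(1 <= e < k.+1) p i ^- e
                    = (1 - p i ^+ k) / ((1 - p i) * p i ^+ k)))
  /\
  (* (ii) *)
  ((1 < m)%N -> (forall j j', p j = p j') ->
     (forall S : seq 'I_m, size S = k ->
        ((m ^ k)%:R%:E <= expected_wait p S)%E)
     /\ (exists S : seq 'I_m, size S = k /\ (forall T, overlap T S -> T = S))
     /\ (forall S : seq 'I_m, size S = k ->
           (forall T, overlap T S -> T = S) ->
           expected_wait p S = (m ^ k)%:R%:E)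
     /\ (forall S : seq 'I_m, size S = k -> nruns S = 2%N ->
           forall T, overlap T S -> T = S)).
Proof.
(* Nonnegativity of p follows from the hypotheses of (i) and of (ii). *)
move=> m_gt0 k_gt0 _ p_sum1; split=> [p_gt0 i p_min|m_gt1 p_const].
  split; [|split].
  - move=> S <-; rewrite expected_waitE // lee_fin.
    exact: overlap_sum_le_sum_invX.
  - by rewrite expected_waitE // overlap_sum_nseq.
  - by move=> pi_lt1; rewrite sum_invX // ?lt0r_neq0 ?lt_eqF.
have p_unif := uniform_probE p_const p_sum1.
have p_gt0 j : 0 < p j by rewrite p_unif invr_gt0 ltr0n.
have inv_weight S : size S = k -> (weight p S)^-1 = (m ^ k)%:R.
  by move=> <-; rewrite (weight_const _ p_unif) exprVn invrK natrX.
split; [|split; [|split]].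
- move=> S S_k; rewrite expected_waitE // lee_fin -(inv_weight S S_k).
  by apply: inv_weight_le_overlap_sum; rewrite ?S_k.
- exists (Ordinal m_gt0 :: nseq k.-1 (Ordinal m_gt1)).
  split; first by rewrite /= size_nseq prednK.
  by move=> U; apply: overlap_cons_notin; rewrite mem_nseq negb_and orbC.
- move=> S S_k S_trivial; rewrite expected_waitE // overlap_sum_trivial ?S_k //.
  by rewrite inv_weight.
- move=> S _ /nruns_eq2[a [b [r [t [ne_ab ->]]]]] U.
  by apply: overlap_nseq_cat; rewrite // mem_nseq (negPf ne_ab).
Qed.
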